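(* Let $\Omega\subset\mathbb{R}^2$ be open and bounded with piecewise-smooth boundary $\Gamma$, let $\beta_x,\beta_y\in\mathbb{R}$, and let $\Gamma_-=\{(x,y)\in\Gamma:\beta_xn_x+\beta_yn_y<0\}$, $\Gamma_+=\Gamma\setminus\Gamma_-$. Let $D_x=H^{-1}Q_x$ and $D_y=H^{-1}Q_y$ be SBP operators (with a common norm matrix $H$) for $\partial/\partial x$ and $\partial/\partial y$ on a node set $S$, with boundary matrices $E_x,E_y$, and suppose $\beta_xE_x+\beta_yE_y=E_++E_-$ where $E_+$ is symmetric positive semi-definite, $E_-$ is symmetric negative semi-definite, and $\mathbf{p}_k^TE_\pm\mathbf{p}_m=\oint_{\Gamma_\pm}\mathcal{P}_k\mathcal{P}_m(\beta_xn_x+\beta_yn_y)\,d\Gamma$ for all $k,m\in\{1,\dots,\eta_\tau\}$. Let $\mathbf{u}(t)$ solve $$\frac{d\mathbf{u}}{dt}+\beta_xD_x\mathbf{u}+\beta_yD_y\mathbf{u}=\sigma H^{-1}E_-(\mathbf{u}-\mathbf{u}_{bc})$$ with homogeneous boundary data $\mathbf{u}_{bc}=\mathbf{0}$ and bounded initial condition. If $\sigma\ge\tfrac12$, then $\|\mathbf{u}\|_H=\sqrt{\mathbf{u}^TH\mathbf{u}}$ is non-increasing in $t$.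
   Context: Monomial basis: $\mathcal{P}_k(x,y)=x^{i}y^{j-i}$ with $k=j(j+1)/2+i+1$, $0\le i\le j$; $\mathcal{P}_1,\dots,\mathcal{P}_{\eta_q}$ are the monomials of total degree at most $q$, $\eta_q=(q+1)(q+2)/2$. $\mathbf{p}_k$ is the vector of values of $\mathcal{P}_k$ at the nodes. $(n_x,n_y)$ is the outward unit normal on $\Gamma$. Definition (SBP operator): an $n\times n$ matrix $D_x$ is a degree $p$ SBP approximation of $\partial/\partial x$ on nodes $S$ if (1) $D_x\mathbf{p}_k=\mathbf{p}_k'$ for all $k\le\eta_p$, where $\mathbf{p}_k'$ holds the values of $\partial\mathcal{P}_k/\partial x$ at the nodes; (2) $D_x=H^{-1}Q_x$ with $H$ symmetric positive definite; (3) $Q_x=Q_x^A+\tfrac12E_x$ with $(Q_x^A)^T=-Q_x^A$, $E_x^T=E_x$, and $\mathbf{p}_k^TE_x\mathbf{p}_m=\oint_\Gamma\mathcal{P}_k\mathcal{P}_mn_x\,d\Gamma$ for all $k,m\le\eta_\tau$, for some integer $\tau\ge p$. The $y$-version uses $\partial/\partial y$ and $n_y$ with matrices $D_y,Q_y,Q_y^A,E_y$. *)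

From HB Require Import structures.
From mathcomp Require Import all_boot all_order all_algebra.
From mathcomp Require Import all_classical all_reals all_analysis.
Set Implicit Arguments. Unset Strict Implicit. Unset Printing Implicit Defensive.
Import Order.TTheory GRing.Theory Num.Theory.
Import numFieldNormedType.Exports.
Local Open Scope classical_set_scope.
Local Open Scope ring_scope.

Section Defs.
Variable R : realType.

Definition qform n (A : 'M[R]_n) (v : 'cV[R]_n) : R := (v^T *m A *m v) 0 0.
Definition bform n (A : 'M[R]_n) (v w : 'cV[R]_n) : R := (v^T *m A *m w) 0 0.
Definition symmetric_mx n (A : 'M[R]_n) : Prop := A^T = A.
Definition skew_mx n (A : 'M[R]_n) : Prop := A^T = - A.
Definition posdef_mx n (A : 'M[R]_n) : Prop :=
  symmetric_mx A /\ forall v : 'cV[R]_n, v != 0 -> 0 < qform A v.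
Definition psd_mx n (A : 'M[R]_n) : Prop :=
  symmetric_mx A /\ forall v : 'cV[R]_n, 0 <= qform A v.
Definition nsd_mx n (A : 'M[R]_n) : Prop :=
  symmetric_mx A /\ forall v : 'cV[R]_n, qform A v <= 0.
Definition Hnorm n (H : 'M[R]_n) (u : 'cV[R]_n) : R := Num.sqrt (qform H u).

(* The monomial P_k with k = j(j+1)/2 + i + 1, 0 <= i <= j, is x^i y^(j-i);
   "k <= eta_q" is equivalent to "j <= q".  We index monomials by (i, j). *)
Definition mono (i j : nat) (x y : R) : R := x ^+ i * y ^+ (j - i).
Definition dx_mono (i j : nat) (x y : R) : R := i%:R * x ^+ i.-1 * y ^+ (j - i).
Definition dy_mono (i j : nat) (x y : R) : R :=
  (j - i)%:R * x ^+ i * y ^+ (j - i).-1.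

Definition nodevec n (xs ys : 'I_n -> R) (f : R -> R -> R) : 'cV[R]_n :=
  \col_l f (xs l) (ys l).

(* A boundary piece is a C^1 curve t |-> (gx t, gy t), t in [0,1],
   oriented so that (gy', -gx') is an outward normal (times the speed). *)
Record piece := Piece { gx : R -> R; gy : R -> R }.

Definition C1 (f : R -> R) : Prop :=
  (forall t, derivable f t 1) /\ continuous (derive1 f).

Definition ppoint (c : piece) (t : R) : R * R := (gx c t, gy c t).
(* normal vector times speed: (n_x, n_y) |gamma'| *)
Definition nxs (c : piece) (t : R) : R := derive1 (gy c) t.
Definition nys (c : piece) (t : R) : R := - derive1 (gx c) t.

Definition pc (G : seq piece) (k : nat) : piece := nth (Piece id id) G k.

Definition bounded_set2 (O : set (R * R)) : Prop :=
  exists M : R, forall z, O z -> `|z.1| <= M /\ `|z.2| <= M.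

Definition pw_smooth_boundary (Om : set (R * R)) (G : seq piece) : Prop :=
  [/\ open Om /\ bounded_set2 Om,
      (forall k : 'I_(size G), let c := pc G k in [/\ C1 (gx c), C1 (gy c) &
           forall t, (t \in `[0, 1]) -> (nxs c t, nys c t) != (0, 0)]),
      closure Om `\` Om =
        [set z | exists (k : 'I_(size G)) t, let c := pc G k in (t \in `[0, 1]) /\ z = ppoint c t],
      (forall (a b : 'I_(size G)) s t, (s \in `]0, 1[) -> (t \in `]0, 1[) ->
          ppoint (pc G a) s = ppoint (pc G b) t ->
          a = b /\ s = t)
    &
      (forall (k : 'I_(size G)) t, let c := pc G k in (t \in `]0, 1[) ->
          exists2 e0 : R, 0 < e0 & forall e, 0 < e < e0 ->
            ~ Om (gx c t + e * nxs c t, gy c t + e * nys c t) /\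
              Om (gx c t - e * nxs c t, gy c t - e * nys c t))].

(* \oint_Gamma f n_x dGamma,  \oint_Gamma f n_y dGamma *)
Definition bint_x (G : seq piece) (f : R -> R -> R) : R :=
  \sum_(c <- G) Rintegral lebesgue_measure `[0, 1]
     (fun t => f (gx c t) (gy c t) * nxs c t).
Definition bint_y (G : seq piece) (f : R -> R -> R) : R :=
  \sum_(c <- G) Rintegral lebesgue_measure `[0, 1]
     (fun t => f (gx c t) (gy c t) * nys c t).

Definition bdotn (bx by_ : R) (c : piece) (t : R) : R :=
  bx * nxs c t + by_ * nys c t.
(* \oint_{Gamma_-} f (beta.n) dGamma, Gamma_- = {beta.n < 0} *)
Definition bint_minus (bx by_ : R) (G : seq piece) (f : R -> R -> R) : R :=
  \sum_(c <- G) Rintegral lebesgue_measure `[0, 1]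
     (fun t => if bdotn bx by_ c t < 0
               then f (gx c t) (gy c t) * bdotn bx by_ c t else 0).
(* \oint_{Gamma_+} f (beta.n) dGamma, Gamma_+ = Gamma \ Gamma_- *)
Definition bint_plus (bx by_ : R) (G : seq piece) (f : R -> R -> R) : R :=
  \sum_(c <- G) Rintegral lebesgue_measure `[0, 1]
     (fun t => if bdotn bx by_ c t < 0
               then 0 else f (gx c t) (gy c t) * bdotn bx by_ c t).

(* Generic degree-p SBP operator with exactness degree tau for a derivative
   (dmono = derivative of monomials) and boundary functional
   bnd f = \oint_Gamma f n dGamma. *)
Definition SBP_gen n (xs ys : 'I_n -> R) (p tau : nat)
    (dmono : nat -> nat -> R -> R -> R) (bnd : (R -> R -> R) -> R)
    (D H Q QA E : 'M[R]_n) : Prop :=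
  [/\ (forall i j, (i <= j <= p)%N ->
         D *m nodevec xs ys (mono i j) = nodevec xs ys (dmono i j)),
      D = invmx H *m Q /\ posdef_mx H,
      Q = QA + 2^-1 *: E /\ skew_mx QA /\ symmetric_mx E &
      forall i j i' j', (i <= j <= tau)%N -> (i' <= j' <= tau)%N ->
        bform E (nodevec xs ys (mono i j)) (nodevec xs ys (mono i' j')) =
        bnd (fun x y => mono i j x y * mono i' j' x y)].

Definition SBP_x n (G : seq piece) (xs ys : 'I_n -> R) (p tau : nat)
  (D H Q QA E : 'M[R]_n) : Prop := SBP_gen xs ys p tau dx_mono (bint_x G) D H Q QA E.
Definition SBP_y n (G : seq piece) (xs ys : 'I_n -> R) (p tau : nat)
  (D H Q QA E : 'M[R]_n) : Prop := SBP_gen xs ys p tau dy_mono (bint_y G) D H Q QA E.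

Definition vderivable n (u : R -> 'cV[R]_n) (t : R) : Prop :=
  forall l, derivable (fun s => u s l 0) t 1.
Definition vderive n (u : R -> 'cV[R]_n) (t : R) : 'cV[R]_n :=
  \col_l derive1 (fun s => u s l 0) t.

End Defs.

From HB Require Import structures.
From mathcomp Require Import all_boot all_order all_algebra.
From mathcomp Require Import all_classical all_reals all_analysis.
From mathcomp Require Import lra.
Import Order.TTheory GRing.Theory Num.Theory.
Import numFieldNormedType.Exports.
Local Open Scope classical_set_scope.
Local Open Scope ring_scope.
Set Implicit Arguments. Unset Strict Implicit. Unset Printing Implicit Defensive.

(* Energy method.  Since H is symmetric, d/dt u^T H u = 2 u^T H u'.  Inserting
   the scheme, the skew parts Q^A of Q_x, Q_y drop out of the quadratic form and
   only u^T (b_x E_x + b_y E_y) u / 2 = u^T (E_+ + E_-) u / 2 survives, so the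
   rate is (2 sigma - 1) u^T E_- u - u^T E_+ u <= 0 when sigma >= 1/2. *)

Section QuadraticForms.
Variables (R : realType) (n : nat).
Implicit Types (A B : 'M[R]_n) (v w : 'cV[R]_n).

Lemma bformC A v w : symmetric_mx A -> bform A w v = bform A v w.
Proof.
move=> symA; rewrite /bform -trace_mx11 -mxtrace_tr.
by rewrite !trmx_mul trmxK symA mulmxA trace_mx11.
Qed.

Lemma qformD A B v : qform (A + B) v = qform A v + qform B v.
Proof. by rewrite /qform mulmxDr mulmxDl mxE. Qed.

Lemma qformN A v : qform (- A) v = - qform A v.
Proof. by rewrite /qform mulmxN mulNmx mxE. Qed.

Lemma qformZ c A v : qform (c *: A) v = c * qform A v.
Proof. by rewrite /qform -scalemxAr -scalemxAl mxE. Qed.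

Lemma qform_skew A v : skew_mx A -> qform A v = 0.
Proof.
move=> skA; have qN : qform A v = - qform A v.
  rewrite -qformN -skA /qform -trace_mx11 -mxtrace_tr.
  by rewrite !trmx_mul trmxK mulmxA trace_mx11.
by apply/eqP; rewrite -[_ == 0](mulrn_eq0 _ 2) mulr2n {2}qN subrr.
Qed.

Lemma posdef_mx_unit A : posdef_mx A -> A \in unitmx.
Proof.
case=> _ posA; rewrite unitmxE unitfE; apply/negP => /det0P [v v0 vA].
have /posA : v^T != 0 by rewrite trmx_eq0.
by rewrite /qform trmxK vA mul0mx mxE ltxx.
Qed.

Lemma bform_invmx A B v : A \in unitmx ->
  bform A v (invmx A *m (B *m v)) = qform B v.
Proof. by move=> uA; rewrite /bform /qform !mulmxA mulmxK. Qed.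

Lemma bform_sum A v w : bform A v w = \sum_i \sum_j A i j * (v i 0 * w j 0).
Proof.
rewrite /bform mxE exchange_big /=; apply: eq_bigr => i _.
rewrite mxE big_distrl /=; apply: eq_bigr => j _.
by rewrite !mxE [v _ _ * _]mulrC mulrA.
Qed.

Lemma is_derive_qform A (u : R -> 'cV[R]_n) t w :
  (forall l, is_derive t (1 : R) (fun s => u s l 0) (w l 0)) ->
  is_derive t (1 : R) (fun s => qform A (u s)) (bform A (u t) w + bform A w (u t)).
Proof.
move=> du.
have -> : (fun s => qform A (u s)) =
    \sum_i \sum_j (A i j \*: ((fun s => u s i 0) * (fun s => u s j 0))).
  apply/funext => s; rewrite [LHS]bform_sum fct_sumE.
  by apply: eq_bigr => i _; rewrite fct_sumE.
apply: is_derive_eq; rewrite !bform_sum -big_split /=; apply: eq_bigr => i _.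
rewrite -big_split /=; apply: eq_bigr => j _.
by rewrite /GRing.scale /= -mulrDr [w i 0 * _]mulrC.
Qed.

Lemma continuous_qform A (u : R -> 'cV[R]_n) (D : set R) :
  (forall l, {within D, continuous (fun s => u s l 0)}) ->
  {within D, continuous (fun s => qform A (u s))}.
Proof.
move=> cu; have -> : (fun s => qform A (u s)) =
    (fun s => \sum_i \sum_j A i j * (u s i 0 * u s j 0)).
  by apply/funext => s; rewrite [LHS]bform_sum.
apply: continuous_big => [|i _]; first exact: add_continuous.
apply: continuous_big => [|j _ x]; first exact: add_continuous.
have uij : {for x, continuous (fun y : subspace D => u y i 0 * u y j 0)}.
  by have := @continuousM R (subspace D) _ _ x (cu i x) (cu j x).
have cA : {for x, continuous (fun _ : subspace D => A i j)}.
  exact: cst_continuous.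
by have := @continuousM R (subspace D) _ _ x cA uij.
Qed.

End QuadraticForms.

Section Energy.
Variables (R : realType) (n : nat).
Implicit Types (v w : 'cV[R]_n).

Lemma qform_SBP (xs ys : 'I_n -> R) p tau dmono bnd (D H Q QA E : 'M[R]_n) v :
  SBP_gen xs ys p tau dmono bnd D H Q QA E -> qform Q v = 2^-1 * qform E v.
Proof. by case=> _ _ [-> [skA _]] _; rewrite qformD qform_skew ?add0r ?qformZ. Qed.

Lemma SAT_energy_rate_le0 (H Qx Qy Ex Ey Ep Em : 'M[R]_n) bx by_ sigma v w :
  H \in unitmx ->
  qform Qx v = 2^-1 * qform Ex v -> qform Qy v = 2^-1 * qform Ey v ->
  bx *: Ex + by_ *: Ey = Ep + Em ->
  0 <= qform Ep v -> qform Em v <= 0 -> 2^-1 <= sigma ->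
  w + bx *: (invmx H *m Qx *m v) + by_ *: (invmx H *m Qy *m v) =
    sigma *: (invmx H *m (Em *m v)) ->
  bform H v w <= 0.
Proof.
move=> uH qQx qQy Esplit Ep0 Em0 sig ode.
have -> : w = invmx H *m ((sigma *: Em - bx *: Qx - by_ *: Qy) *m v).
  rewrite !mulmxBl !mulmxBr -!scalemxAl -!scalemxAr !mulmxA.
  by rewrite -mulmxA -ode addrAC addrK addrK.
have qE : bx * qform Ex v + by_ * qform Ey v = qform Ep v + qform Em v.
  by rewrite -!qformZ -!qformD Esplit.
rewrite bform_invmx // !qformD !qformN !qformZ qQx qQy.
nra.
Qed.

End Energy.

Theorem theorem3p5 (R : realType) (Om : set (R * R)) (G : seq (piece R))
  (bx by_ : R) (n p tau : nat) (xs ys : 'I_n -> R)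
  (H Dx Qx QAx Ex Dy Qy QAy Ey Ep Em : 'M[R]_n)
  (sigma : R) (u : R -> 'cV[R]_n) :
  pw_smooth_boundary Om G ->
  (p <= tau)%N ->
  SBP_x G xs ys p tau Dx H Qx QAx Ex ->
  SBP_y G xs ys p tau Dy H Qy QAy Ey ->
  bx *: Ex + by_ *: Ey = Ep + Em ->
  psd_mx Ep -> nsd_mx Em ->
  (forall i j i' j', (i <= j <= tau)%N -> (i' <= j' <= tau)%N ->
     bform Ep (nodevec xs ys (mono i j)) (nodevec xs ys (mono i' j')) =
     bint_plus bx by_ G (fun x y => mono i j x y * mono i' j' x y)) ->
  (forall i j i' j', (i <= j <= tau)%N -> (i' <= j' <= tau)%N ->
     bform Em (nodevec xs ys (mono i j)) (nodevec xs ys (mono i' j')) =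
     bint_minus bx by_ G (fun x y => mono i j x y * mono i' j' x y)) ->
  (* u solves the semi-discrete problem for t > 0 with u_bc = 0,
     and is continuous on [0, +oo) *)
  (forall l, {within `[0, +oo[, continuous (fun s => u s l 0)}) ->
  (forall t, 0 < t -> vderivable u t /\
     vderive u t + bx *: (Dx *m u t) + by_ *: (Dy *m u t) =
     sigma *: (invmx H *m (Em *m (u t - 0)))) ->
  2^-1 <= sigma ->
  forall s t, 0 <= s -> s <= t -> Hnorm H (u t) <= Hnorm H (u s).
Proof.
move=> _ _ SBPx SBPy Esplit [_ Ep0] [_ Em0] _ _ cont scheme sig s t s0 st.
have [_ [DxE Hpd] _ _] := SBPx; have [_ [DyE _] _ _] := SBPy.
have [symH uH] := (Hpd.1, posdef_mx_unit Hpd).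
have dE (x : R) : 0 < x -> is_derive x (1 : R) (fun s => qform H (u s))
    (bform H (u x) (vderive u x) + bform H (vderive u x) (u x)).
  move=> x0; apply: is_derive_qform => l; have [du _] := scheme x x0.
  by rewrite mxE derive1E; exact: derivableP (du l).
rewrite /Hnorm ler_wsqrtr //.
apply: (@ler0_derive1_nincry R (fun s => qform H (u s)) 0) => //.
- by move=> x; rewrite in_itv /= andbT => /dE [].
- move=> x; rewrite in_itv /= andbT => x0.
  rewrite derive1E (@derive_val _ _ _ _ _ _ _ (dE x x0)).
  have [_ ode] := scheme x x0; rewrite subr0 DxE DyE in ode.
  rewrite (bformC (u x) _ symH) -mulr2n mulrn_wle0 //.
  exact: (SAT_energy_rate_le0 uH (qform_SBP (u x) SBPx) (qform_SBP (u x) SBPy)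
    Esplit (Ep0 _) (Em0 _) sig ode).
- exact: continuous_qform.
Qed.
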